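(* Let $\mathcal{C}$ be a systematic $[n,k,d]$ linear code over $\mathbb{F}_q$ with information symbols in the first $k$ coordinates, which is an $(r,\delta)_i$ code and achieves $$d = n-k+1-\left(\left\lceil \tfrac{k}{r}\right\rceil -1\right)(\delta-1).$$ Then the generalized Hamming weights of the dual code satisfy $$d^{\perp}_{(\lceil k/r\rceil -1)(\delta-1)+i} \;=\; k+\left(\left\lceil \tfrac{k}{r}\right\rceil -1\right)(\delta-1)+i$$ for all $1 \le i \le n-k-(\delta-1)\left(\lceil k/r\rceil -1\right)$.
   Context: For a linear code $\mathcal{D}$ of dimension $m$, its $j$-th generalized Hamming weight ($1\le j\le m$) is the minimum, over all $j$-dimensional subcodes $\mathcal{E}$ of $\mathcal{D}$, of the size of the support $\mathrm{supp}(\mathcal{E}) = \bigcup_{\mathbf{c}\in\mathcal{E}}\{l : c_l \neq 0\}$. $d^\perp_j$ denotes the $j$-th generalized Hamming weight of the dual code $\mathcal{C}^\perp$. Coordinate $i$ has locality $(r,\delta)$ if there is $S_i \subseteq [n]$ with $i\in S_i$, $|S_i|\le r+\delta-1$, such that the punctured code $\mathcal{C}|_{S_i}$ (delete coordinates outside $S_i$) has minimum distance at least $\delta$. An $(r,\delta)_i$ code is a systematic linear code in which all $k$ information coordinates have locality $(r,\delta)$. *)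

(* Linear codes of length n over a finite field F are
   represented as row spaces of n x n matrices (mxalgebra). *)
From HB Require Import structures.
From mathcomp Require Import all_boot all_order all_algebra all_fingroup all_field.
Set Implicit Arguments. Unset Strict Implicit. Unset Printing Implicit Defensive.
Import GRing.Theory Num.Theory.
Local Open Scope ring_scope.

Section Codes.
Variables (F : finFieldType) (n : nat).

Definition in_code (C : 'M[F]_n) (c : 'rV[F]_n) : bool := (c <= C)%MS.

Definition supp (c : 'rV[F]_n) : {set 'I_n} := [set l | c 0 l != 0].

Definition suppmx (E : 'M[F]_n) : {set 'I_n} :=
  [set l | [exists c : 'rV[F]_n, (c <= E)%MS && (c 0 l != 0)]].

Definition mindist (C : 'M[F]_n) : nat :=
  \big[minn/n]_(c : 'rV[F]_n | (c <= C)%MS && (c != 0)) #|supp c|.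

Definition dual (C : 'M[F]_n) : 'M[F]_n := kermx C^T.

Definition ghw (D : 'M[F]_n) (j : nat) : nat :=
  \big[minn/n]_(E : 'M[F]_n | (E <= D)%MS && (\rank E == j)) #|suppmx E|.

Definition systematic_first (C : 'M[F]_n) (k : nat) : Prop :=
  exists G : 'M[F]_(k, n), (G == C)%MS /\
    forall (a : 'I_k) (j : 'I_n), (j < k)%N -> G a j = (nat_of_ord a == j)%:R.

(* coordinate i has locality (r, delta): there is S containing i with
   |S| <= r + delta - 1 such that the punctured code C|_S has minimum
   distance >= delta (every codeword nonzero on S has >= delta nonzero
   entries in S) *)
Definition has_locality (C : 'M[F]_n) (r delta : nat) (i : 'I_n) : Prop :=
  exists S : {set 'I_n}, i \in S /\ (#|S| <= r + delta - 1)%N /\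
    forall c : 'rV[F]_n, (c <= C)%MS -> (supp c :&: S != set0) ->
      (delta <= #|supp c :&: S|)%N.

Definition rdelta_i_code (C : 'M[F]_n) (k r delta : nat) : Prop :=
  systematic_first C k /\
  forall i : 'I_n, (i < k)%N -> has_locality C r delta i.

End Codes.

Definition ceil_div (k r : nat) : nat := (k + r - 1) %/ r.

From HB Require Import structures.
From mathcomp Require Import all_boot all_order all_algebra all_fingroup all_field.
From mathcomp Require Import zify.
Import Order.TTheory GRing.Theory Num.Theory.
Local Open Scope ring_scope.

(* The locality hypothesis only matters through the value of d it forces: with
   t := (ceil(k/r) - 1)(delta - 1), the code has d = n - k - t + 1.
   For every code of dimension k, d^perp_j <= k + j, because the dual words
   vanishing outside a fixed set of k + j coordinates form a space of dimension
   at least j.  Conversely, if a j-dimensional subcode E of the dual had support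
   inside a set U of fewer than k + j coordinates, then C and the words
   vanishing on U would both lie in the kernel of E^T, of dimension n - j, while
   their dimensions add up to more than n - j; so C would contain a nonzero
   word of weight at most n - |U| <= n - k - j + 1 < d when j > t. *)

Lemma leq_bigmin_cond (I : finType) (P : pred I) (f : I -> nat) (m b : nat) :
  (b <= m)%N -> (forall i, P i -> b <= f i)%N ->
  (b <= \big[minn/m]_(i | P i) f i)%N.
Proof.
move=> le_bm le_bf.
by have := @le_bigmin _ nat _ (index_enum I) f m b P le_bm le_bf; rewrite -minEnat.
Qed.

Lemma bigmin_leq_cond (I : finType) (P : pred I) (f : I -> nat) (m : nat) (j : I) :
  P j -> (\big[minn/m]_(i | P i) f i <= f j)%N.
Proof. by move=> Pj; have := bigmin_le_cond m f Pj; rewrite -minEnat. Qed.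

Lemma exists_superset_card (T : finType) (S : {set T}) (m : nat) :
  (#|S| <= m <= #|T|)%N -> exists2 U : {set T}, S \subset U & #|U| = m.
Proof.
elim: m => [|m IHm] /andP [le_Sm le_mT].
  by exists S; last by apply/eqP; rewrite -leqn0.
have [eq_Sm | neq_Sm] := eqVneq #|S| m.+1; first by exists S.
have [U sSU card_U] : exists2 U : {set T}, S \subset U & #|U| = m.
  by apply: IHm; rewrite (ltnW le_mT) andbT -ltnS ltn_neqAle neq_Sm.
have /card_gt0P [x Ux] : (0 < #|~: U|)%N by rewrite cardsCs setCK; lia.
exists (x |: U); first exact: subset_trans sSU (subsetUr _ _).
by rewrite cardsU1 card_U; move: Ux; rewrite inE => ->.
Qed.

Section VanishingWords.
Variables (F : finFieldType) (n : nat).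
Implicit Types (C D E : 'M[F]_n) (U : {set 'I_n}) (c : 'rV[F]_n).

Definition coord_mx U : 'M[F]_(n, #|U|) := \matrix_(l, a) (l == enum_val a)%:R.

Definition vanish_on U : 'M[F]_n := kermx (coord_mx U).

Lemma rank_vanish_on U : (n - #|U| <= \rank (vanish_on U))%N.
Proof. by rewrite mxrank_ker leq_sub2l // rank_leq_col. Qed.

Lemma vanish_onP {U c l} : (c <= vanish_on U)%MS -> l \in U -> c 0 l = 0.
Proof.
move=> cU Ul; move: cU; rewrite sub_kermx => /eqP/matrixP/(_ 0 (enum_rank_in Ul l)).
rewrite !mxE => <-; rewrite (bigD1 l) //= big1 => [|i /negbTE neq_il].
  by rewrite !mxE enum_rankK_in // eqxx mulr1 addr0.
by rewrite mxE enum_rankK_in // neq_il mulr0.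
Qed.

Lemma supp_vanish_on {U c} : (c <= vanish_on U)%MS -> supp c \subset ~: U.
Proof.
move=> cU; apply/subsetP => l; rewrite !inE.
by apply: contraNN => Ul; rewrite (vanish_onP cU Ul).
Qed.

Lemma suppmx_vanish_on {U E} : (E <= vanish_on U)%MS -> suppmx E \subset ~: U.
Proof.
move=> EU; apply/subsetP => l; rewrite !inE => /existsP [c /andP [cE]].
by apply: contraNN => Ul; rewrite (vanish_onP (submx_trans cE EU) Ul).
Qed.

Lemma vanish_on_mul_tr {U m} {M : 'M[F]_(m, n)} {E} :
  (M <= vanish_on U)%MS -> suppmx E \subset U -> M *m E^T = 0.
Proof.
move=> MU sEU; apply/matrixP => a b; rewrite !mxE big1 // => l _.
have [Ul | nUl] := boolP (l \in U).
  by have := vanish_onP (submx_trans (row_sub a M) MU) Ul; rewrite mxE => ->; rewrite mul0r.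
suff -> : E^T l b = 0 by rewrite mulr0.
apply: contraNeq nUl; rewrite mxE => Ebl; apply: (subsetP sEU); rewrite inE.
by apply/existsP; exists (row b E); rewrite row_sub mxE.
Qed.

Lemma dual_mul_tr {C E} : (E <= dual C)%MS -> C *m E^T = 0.
Proof. by rewrite sub_kermx => /eqP CE; rewrite -[C]trmxK -trmx_mul CE trmx0. Qed.

Lemma mindist_le_supp {C c} : (c <= C)%MS -> c != 0 -> (mindist C <= #|supp c|)%N.
Proof. by move=> cC nz_c; apply: bigmin_leq_cond; rewrite cC nz_c. Qed.

Lemma ghw_le_suppmx {D E j} :
  (E <= D)%MS -> \rank E = j -> (ghw D j <= #|suppmx E|)%N.
Proof. by move=> ED rE; apply: bigmin_leq_cond; rewrite ED rE eqxx. Qed.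

Lemma ghw_ge D j b :
  (b <= n)%N -> (forall E, (E <= D)%MS -> \rank E = j -> b <= #|suppmx E|)%N ->
  (b <= ghw D j)%N.
Proof. by move=> le_bn le_bE; apply: leq_bigmin_cond => // E /andP [ED /eqP]; apply: le_bE. Qed.

Lemma ghw_dual_le C j : (\rank C + j <= n)%N -> (ghw (dual C) j <= \rank C + j)%N.
Proof.
move=> le_n.
have [U _ card_U] : exists2 U : {set 'I_n}, set0 \subset U & #|U| = (\rank C + j)%N.
  by apply: exists_superset_card; rewrite cards0 card_ord.
pose E0 := (dual C :&: vanish_on (~: U))%MS.
have le_j_E0 : (j <= \rank E0)%N.
  have := mxrank_sum_cap (dual C) (vanish_on (~: U)).
  have := rank_leq_col (dual C + vanish_on (~: U))%MS.
  have := rank_vanish_on (~: U); have := cardsC U.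
  by rewrite /dual mxrank_ker mxrank_tr card_ord -/E0; lia.
pose E := <<(pid_mx j : 'M[F]_(\rank E0)) *m row_base E0>>%MS.
have sEE0 : (E <= E0)%MS by rewrite genmxE (submx_trans (submxMl _ _)) ?eq_row_base.
have rE : \rank E = j by rewrite genmxE mxrankMfree ?row_base_free // rank_pid_mx.
apply: leq_trans (ghw_le_suppmx (submx_trans sEE0 (capmxSl _ _)) rE) _.
rewrite -card_U subset_leq_card //.
by rewrite -[U]setCK suppmx_vanish_on // (submx_trans sEE0 (capmxSr _ _)).
Qed.

Lemma exists_codeword_vanish_on {C E U} :
  (E <= dual C)%MS -> suppmx E \subset U -> (#|U| < \rank C + \rank E)%N ->
  exists2 c : 'rV[F]_n, (c <= C :&: vanish_on U)%MS & c != 0.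
Proof.
move=> EC sEU lt_U.
have sum_ker : (C + vanish_on U <= kermx E^T)%MS.
  by rewrite addsmx_sub !sub_kermx dual_mul_tr // (vanish_on_mul_tr _ sEU) ?eqxx.
have lt0_cap : (0 < \rank (C :&: vanish_on U))%N.
  have := mxrankS sum_ker; rewrite mxrank_ker mxrank_tr.
  have := mxrank_sum_cap C (vanish_on U); have := rank_vanish_on U.
  have := rank_leq_col E; lia.
exists (nz_row (C :&: vanish_on U))%MS; first exact: nz_row_sub.
by rewrite nz_row_eq0 -mxrank_eq0 -lt0n.
Qed.

Lemma ghw_dual_ge C j :
  (0 < j)%N -> (\rank C + j <= n)%N -> (n - (\rank C + j - 1) < mindist C)%N ->
  (\rank C + j <= ghw (dual C) j)%N.
Proof.
move=> j_gt0 le_n lt_d; apply: ghw_ge => // E EC rE; rewrite leqNgt.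
apply/negP => lt_E.
have [U sEU card_U] : exists2 U : {set 'I_n}, suppmx E \subset U & #|U| = (\rank C + j - 1)%N.
  by apply: exists_superset_card; rewrite card_ord; lia.
have [c cCU nz_c] := exists_codeword_vanish_on EC sEU ltac:(lia).
have := mindist_le_supp (submx_trans cCU (capmxSl _ _)) nz_c.
have := subset_leq_card (supp_vanish_on (submx_trans cCU (capmxSr _ _))).
have := cardsC U; rewrite card_ord; lia.
Qed.

End VanishingWords.

Theorem corollary1 (F : finFieldType) (n k d r delta : nat) (C : 'M[F]_n) :
  (0 < k)%N -> (0 < r)%N -> (0 < delta)%N ->
  \rank C = k ->
  mindist C = d ->
  rdelta_i_code C k r delta ->
  (d%:Z = n%:Z - k%:Z + 1 - ((ceil_div k r)%:Z - 1) * (delta%:Z - 1)) ->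
  forall i : nat, (1 <= i)%N ->
    (i <= n - k - (delta - 1) * (ceil_div k r - 1))%N ->
    ghw (dual C) ((ceil_div k r - 1) * (delta - 1) + i) =
      (k + (ceil_div k r - 1) * (delta - 1) + i)%N.
Proof.
move=> k_gt0 r_gt0 delta_gt0 rC dC _ d_eq i i_gt0 le_i.
have ceil_gt0 : (0 < ceil_div k r)%N by rewrite divn_gt0 //; lia.
set t := ((ceil_div k r - 1) * (delta - 1))%N.
have d_val : (d + t + k = n + 1)%N.
  have t_eq : ((ceil_div k r)%:Z - 1) * (delta%:Z - 1) = t%:Z.
    by rewrite PoszM; congr (_ * _); lia.
  by move: d_eq le_i; rewrite t_eq mulnC -/t; lia.
rewrite -addnA -rC; apply/eqP; rewrite eqn_leq.
by rewrite ghw_dual_le ?ghw_dual_ge; lia.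
Qed.
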